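(* Let $\alpha,\beta,c_3,c_6,v$ be independent indeterminates and take $\mu_1=\mu_2=\mu_4=0$, $\mu_3=\alpha v+c_3$, $\mu_6=\beta v+c_6$. Then $s(t;\mu(v))$ is a power series in $\tau=t^3$, $s(t;\mu(v))=S(t^3,v)$, and $S(\tau,v)$ satisfies \[ \frac{\partial S}{\partial v}=(\alpha S^2+\beta S^3)\frac{\partial S}{\partial\tau}, \] with $S(\tau,0)=s_0(\tau)$, where $s_0(\tau)$ is the power series with $s_0(0)=0$ defined by $s_0=\tau+c_3s_0^2+c_6s_0^3$.
   Context: For parameters $\mu=(\mu_1,\mu_2,\mu_3,\mu_4,\mu_6)$, $s(t;\mu)$ denotes the unique formal power series in $t$ with $s(0;\mu)=0$ satisfying $s=t^3+\mu_1ts+\mu_2t^2s+\mu_3s^2+\mu_4ts^2+\mu_6s^3$ (the cubic $y^2+\mu_1xy+\mu_3y=x^3+\mu_2x^2+\mu_4x+\mu_6$ in Tate coordinates $t=-x/y$, $s=-1/y$). *)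

From mathcomp Require Import all_boot all_order all_algebra.
From mathcomp Require Export mpoly.
Set Implicit Arguments. Unset Strict Implicit. Unset Printing Implicit Defensive.
Import GRing.Theory.
Local Open Scope ring_scope.

(* Formal power series in one variable over a ring R, as coefficient
   sequences: f represents \sum_n f n * t^n. *)
Definition ps (R : Type) := nat -> R.

Definition ps_add {R : nzRingType} (f g : ps R) : ps R := fun n => f n + g n.
Definition ps_scale {R : nzRingType} (a : R) (f : ps R) : ps R := fun n => a * f n.
Definition ps_mul {R : nzRingType} (f g : ps R) : ps R :=
  fun n => \sum_(i < n.+1) f i * g (n - i)%N.
Definition ps_shift {R : nzRingType} (k : nat) (f : ps R) : ps R :=
  fun n => if (k <= n)%N then f (n - k)%N else 0.
Definition ps_mono {R : nzRingType} (k : nat) : ps R := fun n => (n == k)%:R.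
Definition ps_deriv {R : nzRingType} (f : ps R) : ps R := fun n => f n.+1 *+ n.+1.

Definition is_tate_s {R : nzRingType} (mu1 mu2 mu3 mu4 mu6 : R) (s : ps R) : Prop :=
  s 0%N = 0 /\
  s = ps_add (ps_mono 3)
     (ps_add (ps_scale mu1 (ps_shift 1 s))
     (ps_add (ps_scale mu2 (ps_shift 2 s))
     (ps_add (ps_scale mu3 (ps_mul s s))
     (ps_add (ps_scale mu4 (ps_shift 1 (ps_mul s s)))
             (ps_scale mu6 (ps_mul s (ps_mul s s))))))).

Definition is_s0 {R : nzRingType} (c3 c6 : R) (s0 : ps R) : Prop :=
  s0 0%N = 0 /\
  s0 = ps_add (ps_mono 1)
     (ps_add (ps_scale c3 (ps_mul s0 s0))
             (ps_scale c6 (ps_mul s0 (ps_mul s0 s0)))).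

(* The base ring Q[alpha, beta, c3, c6] of independent indeterminates. *)
Definition K := {mpoly rat[4]}.
Definition alpha : K := 'X_(@Ordinal 4 0 isT).
Definition beta  : K := 'X_(@Ordinal 4 1 isT).
Definition c3    : K := 'X_(@Ordinal 4 2 isT).
Definition c6    : K := 'X_(@Ordinal 4 3 isT).

(* v is the variable of {poly K}; mu3 = alpha v + c3, mu6 = beta v + c6. *)
Definition mu3v : {poly K} := alpha *: 'X + c3%:P.
Definition mu6v : {poly K} := beta *: 'X + c6%:P.

(* Only the powers t^(3k) occur in s: a coefficient of index n not divisible by 3 is a sum of
   products of two coefficients of smaller index, one of which is again not divisible by 3.
   Substituting tau = t^3 turns the Tate equation into S = tau + mu3 S^2 + mu6 S^3.
   Differentiating this implicit equation in tau and in v gives S_tau D = 1 and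
   S_v D = alpha S^2 + beta S^3 with D = 1 - 2 mu3 S - 3 mu6 S^2, whence the PDE; these
   identities are proved on polynomial truncations of S.  Finally, evaluation at v = 0 is a
   ring morphism, so S(tau, 0) solves the equation defining s0, whose solution is unique. *)

From mathcomp Require Import all_boot all_order all_algebra ring zify.
From Stdlib Require Import FunctionalExtensionality.
Set Implicit Arguments. Unset Strict Implicit. Unset Printing Implicit Defensive.
Import GRing.Theory.
Local Open Scope ring_scope.

Section PowerSeries.
Variable R : nzRingType.
Implicit Types (f g : ps R) (d n : nat).

(* If f only involves powers of t^d, then f(t) = (ps_decim d f)(t^d). *)
Definition ps_decim d f : ps R := fun j => f (d * j)%N.

Lemma eq_ps_mul f g (f' g' : ps R) : f =1 f' -> g =1 g' -> ps_mul f g =1 ps_mul f' g'.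
Proof. by move=> ef eg n; apply: eq_bigr => i _; rewrite ef eg. Qed.

Lemma ps_mul_coef0 f g : ps_mul f g 0%N = f 0%N * g 0%N.
Proof. by rewrite /ps_mul big_ord1. Qed.

Lemma ps_mul_coef_inner f g n : f 0%N = 0 -> g 0%N = 0 ->
  ps_mul f g n = \sum_(1 <= i < n) f i * g (n - i)%N.
Proof.
move=> f0 g0; case: n => [|n]; first by rewrite ps_mul_coef0 f0 mul0r big_geq.
rewrite /ps_mul -(big_mkord xpredT (fun i => f i * g (n.+1 - i)%N)).
by rewrite big_ltn // big_nat_recr //= f0 subnn g0 mul0r mulr0 add0r addr0.
Qed.

Lemma eq_ps_mul_coef f g (f' g' : ps R) n :
  f 0%N = 0 -> g 0%N = 0 -> f' 0%N = 0 -> g' 0%N = 0 ->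
  (forall k, (0 < k < n)%N -> f k = f' k) -> (forall k, (0 < k < n)%N -> g k = g' k) ->
  ps_mul f g n = ps_mul f' g' n.
Proof.
move=> f0 g0 f'0 g'0 ff' gg'; rewrite !ps_mul_coef_inner //.
by apply: eq_big_nat => i lt_i; rewrite ff' ?gg' //; lia.
Qed.

Lemma ps_mul_coef_eq0 d f g n : f 0%N = 0 -> g 0%N = 0 ->
  (forall k, (k < n)%N -> ~~ (d %| k)%N -> f k = 0) ->
  (forall k, (k < n)%N -> ~~ (d %| k)%N -> g k = 0) ->
  ~~ (d %| n)%N -> ps_mul f g n = 0.
Proof.
move=> f0 g0 f_eq0 g_eq0 ndvd_n; rewrite ps_mul_coef_inner //.
rewrite big_nat_cond big1 // => i /andP[/andP[i_gt0 lt_in] _].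
have [dvd_i|ndvd_i] := boolP (d %| i)%N; last by rewrite f_eq0 ?mul0r.
have ndvd_ni : ~~ (d %| n - i)%N.
  by apply: contra ndvd_n => dvd_ni; rewrite -(subnK (ltnW lt_in)) dvdn_add.
by rewrite g_eq0 ?mulr0 //; lia.
Qed.

Lemma ndvdn_between d n i : (d * n < i < d * n.+1)%N -> ~~ (d %| i)%N.
Proof.
case/andP=> lo hi; apply/negP => /dvdnP[q def_i]; subst i.
have [le_qn|lt_nq] := leqP q n.
- by move: lo; rewrite (mulnC q) ltnNge leq_mul2l le_qn orbT.
- by move: hi; rewrite (mulnC q) ltnNge leq_mul2l lt_nq orbT.
Qed.

Lemma big_ord_dvdn (F : nat -> R) d n : (0 < d)%N ->
  (forall k, ~~ (d %| k)%N -> F k = 0) ->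
  \sum_(i < (d * n)%N.+1) F i = \sum_(j < n.+1) F (d * j)%N.
Proof.
move=> d_gt0 F0; elim: n => [|n IH]; first by rewrite muln0 !big_ord1 /= muln0.
rewrite big_ord_recr [RHS]big_ord_recr /= -IH; congr (_ + _).
rewrite -!(big_mkord xpredT F) (@big_cat_nat _ _ _ (d * n).+1) //=; last first.
  by rewrite ltn_mul2l d_gt0 ltnSn.
rewrite [X in _ + X = _]big1_seq ?addr0 // => i /andP[_].
rewrite mem_index_iota => /andP[lo hi].
by apply/F0/(@ndvdn_between _ n); rewrite lo.
Qed.

Lemma ps_mul_decim d f g n : (0 < d)%N -> (forall k, ~~ (d %| k)%N -> f k = 0) ->
  ps_mul f g (d * n)%N = ps_mul (ps_decim d f) (ps_decim d g) n.
Proof.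
move=> d_gt0 f0; rewrite /ps_mul (big_ord_dvdn (F := fun i => f i * g (d * n - i)%N)) //.
  by apply: eq_bigr => i _; rewrite /ps_decim mulnBr.
by move=> k /f0 ->; rewrite mul0r.
Qed.

Lemma ps_mul_coefM f g (p q : {poly R}) n :
  (forall i, (i <= n)%N -> p`_i = f i) -> (forall i, (i <= n)%N -> q`_i = g i) ->
  (p * q)`_n = ps_mul f g n.
Proof.
move=> pf qg; rewrite coefM; apply: eq_bigr => -[i /= lt_in] _.
by rewrite pf ?qg // leq_subr.
Qed.

Lemma is_s0E (c3 c6 : R) (s : ps R) : is_s0 c3 c6 s ->
  forall n, s n = (n == 1)%:R + c3 * ps_mul s s n + c6 * ps_mul s (ps_mul s s) n.
Proof. by case=> _ {1}-> n; rewrite /ps_add /ps_scale /ps_mono addrA. Qed.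

Lemma is_s0_unique (c3 c6 : R) (s s' : ps R) : is_s0 c3 c6 s -> is_s0 c3 c6 s' -> s =1 s'.
Proof.
move=> hs hs'; have [s0 _] := hs; have [s'0 _] := hs'.
suff agree n k : (k < n)%N -> s k = s' k by move=> n; apply: (agree n.+1).
elim: n k => [//|n IH] k; rewrite ltnS leq_eqVlt => /predU1P[->|/IH//].
case: n IH => [|n] IH; first by rewrite s0 s'0.
have sq0 (h : ps R) : h 0%N = 0 -> ps_mul h h 0%N = 0.
  by rewrite ps_mul_coef0 => ->; rewrite mul0r.
have sq j : (j <= n.+1)%N -> ps_mul s s j = ps_mul s' s' j.
  by move=> le_jn; apply: eq_ps_mul_coef => // i lt_ij; apply: IH; lia.
rewrite (is_s0E hs) (is_s0E hs') sq //; congr (_ + _ * _).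
by apply: eq_ps_mul_coef; rewrite ?sq0 // => i lt_i; rewrite (IH, sq) //; lia.
Qed.

End PowerSeries.

Section TakePoly.
Variable R : nzRingType.
Implicit Types (p q : {poly R}) (m k : nat).

Lemma take_polyMl m p q : take_poly m (take_poly m p * q) = take_poly m (p * q).
Proof.
apply/polyP => i; rewrite !coef_take_poly; case: ltnP => // lt_im.
rewrite !coefM; apply: eq_bigr => -[j /= lt_ji] _.
by rewrite coef_take_poly (leq_ltn_trans _ lt_im).
Qed.

Lemma take_polyMr m p q : take_poly m (p * take_poly m q) = take_poly m (p * q).
Proof.
apply/polyP => i; rewrite !coef_take_poly; case: ltnP => // lt_im.
rewrite !coefM; apply: eq_bigr => -[j /= lt_ji] _.
by rewrite coef_take_poly (leq_ltn_trans _ lt_im) ?leq_subr.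
Qed.

Lemma take_poly_take m k p : (m <= k)%N -> take_poly m (take_poly k p) = take_poly m p.
Proof.
move=> le_mk; apply/polyP => i; rewrite !coef_take_poly.
by case: ltnP => // lt_im; rewrite (leq_trans lt_im le_mk).
Qed.

Lemma deriv_take_poly m p : (take_poly m.+1 p)^`() = take_poly m p^`().
Proof.
apply/polyP => i; rewrite coef_deriv !coef_take_poly coef_deriv ltnS.
by case: ltnP; rewrite ?mul0rn.
Qed.

End TakePoly.

Section InnerDeriv.
Variable R : nzRingType.
Implicit Types (p q : {poly {poly R}}) (c : {poly R}).

(* In {poly {poly R}} the outer variable is tau and the inner one is v: this is d/dv. *)
Definition inner_deriv p : {poly {poly R}} := map_poly (@deriv R) p.

Lemma coef_inner_deriv p i : (inner_deriv p)`_i = (p`_i)^`().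
Proof. by rewrite coef_map_id0 // deriv0. Qed.

Lemma inner_derivD p q : inner_deriv (p + q) = inner_deriv p + inner_deriv q.
Proof. by apply/polyP => i; rewrite coefD !coef_inner_deriv coefD derivD. Qed.

Lemma inner_derivC c : inner_deriv c%:P = (c^`())%:P.
Proof. by apply/polyP => i; rewrite coef_inner_deriv !coefC; case: eqP; rewrite ?deriv0. Qed.

Lemma inner_derivX : inner_deriv 'X = 0.
Proof.
apply/polyP => i; rewrite coef_inner_deriv coefX coef0.
by case: eqP; rewrite ?derivC ?deriv0.
Qed.

Lemma take_poly_inner_deriv m p : take_poly m (inner_deriv p) = inner_deriv (take_poly m p).
Proof.
apply/polyP => i; rewrite coef_take_poly !coef_inner_deriv coef_take_poly.
by case: ltnP; rewrite ?deriv0.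
Qed.

End InnerDeriv.

Lemma inner_derivM (R : comNzRingType) (p q : {poly {poly R}}) :
  inner_deriv (p * q) = inner_deriv p * q + p * inner_deriv q.
Proof.
apply/polyP => i; rewrite coefD !coef_inner_deriv !coefM.
rewrite (big_morph _ (@derivD _) (@deriv0 _)) -big_split /=.
by apply: eq_bigr => j _; rewrite derivM !coef_inner_deriv.
Qed.

Lemma implicit_pde (R : comNzRingType) n (m3 m6 : {poly R}) (A : {poly {poly R}}) :
  take_poly n.+1 A = take_poly n.+1 ('X + m3%:P * A ^+ 2 + m6%:P * A ^+ 3) ->
  take_poly n (inner_deriv A) =
  take_poly n ((m3^`()%:P * A ^+ 2 + m6^`()%:P * A ^+ 3) * A^`()).
Proof.
(* D is the derivative of the implicit equation with respect to A. *)
rewrite [A ^+ 3]exprS !expr2 => fix_A.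
set F := 'X + _ + _ in fix_A; set E := _ + _ * _.
set D := 1 - m3%:P * A *+ 2 - m6%:P * (A * A) *+ 3.
have dtau : take_poly n (A^`() * D) = take_poly n 1.
  have -> : A^`() * D = 1 + A^`() - F^`().
    by rewrite /F /D !derivD !derivM !derivC derivX; ring.
  by rewrite raddfB raddfD /= -!deriv_take_poly fix_A addrK.
have dv : take_poly n.+1 (inner_deriv A * D) = take_poly n.+1 E.
  have -> : inner_deriv A * D = E + inner_deriv A - inner_deriv F.
    by rewrite /F /E /D !inner_derivD !inner_derivM !inner_derivC inner_derivX; ring.
  by rewrite raddfB raddfD /= !take_poly_inner_deriv fix_A addrK.
rewrite -take_polyMl -(take_poly_take E (leqnSn n)) -dv take_poly_take //.
by rewrite take_polyMl -mulrA (mulrC D) -take_polyMr dtau take_polyMr mulr1.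
Qed.

Lemma is_s0_pde (R : comNzRingType) (m3 m6 : {poly R}) (S : ps {poly R}) :
  is_s0 m3 m6 S ->
  forall n, (S n)^`() =
    ps_mul (ps_add (ps_scale m3^`() (ps_mul S S))
                   (ps_scale m6^`() (ps_mul S (ps_mul S S))))
           (ps_deriv S) n.
Proof.
move=> hS n; pose A := \poly_(i < n.+2) S i.
have coefA i : (i < n.+2)%N -> A`_i = S i by move=> lt_i; rewrite coef_poly lt_i.
have coefA2 i : (i < n.+2)%N -> (A ^+ 2)`_i = ps_mul S S i.
  by move=> lt_i; rewrite expr2; apply: ps_mul_coefM => j le_ji; apply: coefA; lia.
have coefA3 i : (i < n.+2)%N -> (A ^+ 3)`_i = ps_mul S (ps_mul S S) i.
  move=> lt_i; rewrite exprS.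
  by apply: ps_mul_coefM => j le_ji; [apply: coefA | apply: coefA2]; lia.
have fix_A : take_poly n.+2 A = take_poly n.+2 ('X + m3%:P * A ^+ 2 + m6%:P * A ^+ 3).
  apply/polyP => i; rewrite !coef_take_poly; case: ltnP => // lt_i.
  by rewrite coefA // (is_s0E hS) !coefD coefX !coefCM coefA2 ?coefA3.
have := congr1 (fun p : {poly {poly R}} => p`_n) (implicit_pde fix_A).
rewrite !coef_take_poly ltnSn coef_inner_deriv coefA // => ->.
apply: ps_mul_coefM => i le_in; last by rewrite coef_deriv coefA.
by rewrite coefD !coefCM coefA2 ?coefA3 //; lia.
Qed.

Lemma ps_mul_rmorph (R S : nzRingType) (phi : {rmorphism R -> S}) (f g : ps R) n :
  phi (ps_mul f g n) = ps_mul (phi \o f) (phi \o g) n.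
Proof. by rewrite rmorph_sum; apply: eq_bigr => i _; rewrite rmorphM. Qed.

Lemma is_s0_rmorph (R S : nzRingType) (phi : {rmorphism R -> S}) (c3 c6 : R) (s : ps R) :
  is_s0 c3 c6 s -> is_s0 (phi c3) (phi c6) (phi \o s).
Proof.
move=> hs; have [s0 _] := hs; split; first by rewrite /= s0 rmorph0.
apply: functional_extensionality => n.
rewrite /ps_add /ps_scale /ps_mono /= {1}(is_s0E hs) !rmorphD !rmorphM rmorph_nat addrA.
rewrite !ps_mul_rmorph; congr (_ + _ + _ * _).
by apply: eq_ps_mul => // i /=; rewrite ps_mul_rmorph.
Qed.

Lemma is_s0_horner (R : comNzRingType) (m3 m6 : {poly R}) (S : ps {poly R}) x :
  is_s0 m3 m6 S -> is_s0 m3.[x] m6.[x] (fun n => (S n).[x]).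
Proof. exact: (is_s0_rmorph (horner_eval x)). Qed.

Section TateSeries.
Variables (R : nzRingType) (m3 m6 : R) (s : ps R).
Hypothesis tate_s : is_tate_s 0 0 m3 0 m6 s.

Lemma is_tate_sE n :
  s n = (n == 3)%:R + m3 * ps_mul s s n + m6 * ps_mul s (ps_mul s s) n.
Proof.
by case: tate_s => _ {1}->; rewrite /ps_add /ps_scale /ps_mono !mul0r !add0r addrA.
Qed.

Lemma tate_s_coef_ndvd3 k : ~~ (3 %| k)%N -> s k = 0.
Proof.
have [s0 _] := tate_s.
have ss0 : ps_mul s s 0%N = 0 by rewrite ps_mul_coef0 s0 mul0r.
suff van n j : (j < n)%N -> ~~ (3 %| j)%N -> s j = 0 by apply: (van k.+1).
elim: n j => [//|n IH] j; rewrite ltnS leq_eqVlt => /predU1P[-> ndvd_n|/IH//].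
have ss_eq0 i : (i <= n)%N -> ~~ (3 %| i)%N -> ps_mul s s i = 0.
  by move=> le_in; apply: ps_mul_coef_eq0 => // l lt_li; apply: IH; lia.
have /negPf n_neq3 : n != 3%N by apply: contraNneq ndvd_n => ->.
rewrite is_tate_sE n_neq3 ss_eq0 // (ps_mul_coef_eq0 (d := 3)) ?mulr0 ?addr0 //.
by move=> i lt_in; apply: ss_eq0; apply: ltnW.
Qed.

Lemma tate_s_decim3 : is_s0 m3 m6 (ps_decim 3 s).
Proof.
have [s0 _] := tate_s; have s_ndvd3 := tate_s_coef_ndvd3.
have decim_ss : ps_decim 3 (ps_mul s s) =1 ps_mul (ps_decim 3 s) (ps_decim 3 s).
  by move=> n; apply: (@ps_mul_decim _ 3).
split; first by rewrite /ps_decim muln0 s0.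
apply: functional_extensionality => n.
rewrite /ps_add /ps_scale /ps_mono {1}/ps_decim is_tate_sE -{1}(muln1 3) eqn_pmul2l //.
rewrite !ps_mul_decim //.
by rewrite addrA (eq_ps_mul (frefl _) decim_ss).
Qed.

End TateSeries.

Theorem mainTheorem8 :
  forall s : ps {poly K},
    is_tate_s 0 0 mu3v 0 mu6v s ->
    exists S : ps {poly K},
      (forall n : nat, s n = if (3 %| n)%N then S (n %/ 3)%N else 0) /\
      (forall n : nat,
         (S n)^`() =
         ps_mul (ps_add (ps_scale alpha%:P (ps_mul S S))
                        (ps_scale beta%:P (ps_mul S (ps_mul S S))))
                (ps_deriv S) n) /\
      (forall s0 : ps K, is_s0 c3 c6 s0 -> forall n : nat, (S n).[0] = s0 n).
Proof.
move=> s tate_s; have S_s0 := tate_s_decim3 tate_s.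
exists (ps_decim 3 s); split; [|split].
- move=> n; case: ifPn => [/dvdnP[q ->]|/(tate_s_coef_ndvd3 tate_s)//].
  by rewrite mulnK // mulnC.
- have dmu3 : mu3v^`() = alpha%:P.
    by rewrite /mu3v derivD derivZ derivX derivC addr0 alg_polyC.
  have dmu6 : mu6v^`() = beta%:P.
    by rewrite /mu6v derivD derivZ derivX derivC addr0 alg_polyC.
  by rewrite -dmu3 -dmu6; apply: is_s0_pde.
- move=> s0 hs0 n.
  have : is_s0 mu3v.[0] mu6v.[0] (fun i => (ps_decim 3 s i).[0]).
    exact: is_s0_horner.
  by rewrite /mu3v /mu6v !hornerE => /is_s0_unique/(_ hs0 n).
Qed.
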